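(* Let $A\in\mathbb{R}^{n\times n}$ be Hurwitz, $B\in\mathbb{R}^{n\times m}$, $C\in\mathbb{R}^{p\times n}$, $\hat A\in\mathbb{R}^{r\times r}$, $\hat B\in\mathbb{R}^{r\times m}$, $\hat C\in\mathbb{R}^{p\times r}$, $\bar T>0$. Let $P_{\bar T}, P_{2, \bar T}$ and $\hat P_{\bar T}$ be the solutions to $$A P_{\bar T}+ P_{\bar T} A^T =-B B^T+e^{A \bar T}B B^T e^{A^T \bar T},\quad A P_{2, {\bar T}}+ P_{2, {\bar T}} \hat A^T =-B \hat B^T+e^{A \bar T}B \hat B^T e^{\hat A^T \bar T},$$ $$\hat A \hat P_{\bar T}+\hat P_{\bar T} \hat A^T =-\hat B \hat B^T+e^{\hat A \bar T}\hat B \hat B^T e^{\hat A^T \bar T},$$ respectively. Then $$\operatorname{tr}(C P_{\bar T} C^T)=\operatorname{tr}(B^T Q_{\bar T} B),\quad \operatorname{tr}(\hat C \hat P_{\bar T} \hat C^T)=\operatorname{tr}(\hat B^T \hat Q_{\bar T} \hat B),\quad \operatorname{tr}(C P_{2, \bar T} \hat C^T)=\operatorname{tr}(\hat B^T Q_{2, \bar T} B),$$ where the matrices $Q_{\bar T}, Q_{2, \bar T}$ and $\hat Q_{\bar T}$ satisfy $$A^T Q_{\bar T}+ Q_{\bar T} A =-C^T C+e^{A^T \bar T}C^T C e^{A \bar T},\quad \hat A^T Q_{2, {\bar T}}+ Q_{2, {\bar T}} A =-\hat C^T C+e^{\hat A^T \bar T} \hat C^T C e^{A \bar T},$$ $$\hat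 A^T \hat Q_{\bar T}+\hat Q_{\bar T} \hat A =-\hat C^T \hat C+e^{\hat A^T \bar T}\hat C^T \hat C e^{\hat A \bar T}.$$
   Context: $\operatorname{tr}$ denotes the trace of a matrix. *)

From HB Require Import structures.
From mathcomp Require Import all_boot all_order all_algebra.
From mathcomp Require Import all_classical all_reals all_analysis.
From mathcomp Require Import complex.
Set Implicit Arguments. Unset Strict Implicit. Unset Printing Implicit Defensive.
Import Order.TTheory GRing.Theory Num.Theory.
Import numFieldNormedType.Exports.
Local Open Scope classical_set_scope.
Local Open Scope ring_scope.

Definition expmx (R : realType) (n : nat) (M : 'M[R]_n) : 'M[R]_n :=
  lim (series (fun k : nat => (k`!%:R)^-1 *: (M ^+ k)) @ \oo).

Definition hurwitz (R : realType) (n : nat) (A : 'M[R]_n) : Prop :=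
  forall z : R[i],
    root (char_poly (map_mx (fun x : R => x%:C%C) A)) z -> complex.Re z < 0.

From HB Require Import structures.
From mathcomp Require Import all_boot all_order all_algebra.
From mathcomp Require Import all_classical all_reals all_analysis.
Import Order.TTheory GRing.Theory Num.Theory.
Import numFieldNormedType.Exports.
Local Open Scope classical_set_scope.
Local Open Scope ring_scope.

(* All three identities are instances of one duality for the Sylvester
   operator S X := A X + X Ah^T.  Uniqueness of P makes S injective, hence
   invertible; if S P0 = - B Bh^T then, because e^{A T} commutes with A and
   e^{Ah^T T} with Ah^T, P = P0 - e^{A T} P0 e^{Ah^T T}.  Since
   tr (Q (S X)) = tr ((Ah^T Q + Q A) X), the equation for Q and cyclicity of
   the trace turn tr (C P Ch^T) into tr (Bh^T Q B). *)

Section MatrixNorm.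
Context {R : realFieldType}.

Lemma mx_entry_norm_le {m n} (M : 'M[R]_(m, n)) i j : `|M i j| <= `|M|.
Proof.
rewrite [leRHS]/Num.Def.normr /= mx_normrE.
by apply/bigmax_geP; right; exists (i, j).
Qed.

Lemma mx_norm_le {m n} (M : 'M[R]_(m, n)) c :
  0 <= c -> (forall i j, `|M i j| <= c) -> `|M| <= c.
Proof.
move=> c_ge0 Mc; rewrite [leLHS]/Num.Def.normr /= mx_normrE.
by apply: bigmax_le => // -[i j] _; exact: Mc.
Qed.

Lemma mulmx_norm_le {m n p} (X : 'M[R]_(m, n)) (Y : 'M[R]_(n, p)) :
  `|X *m Y| <= n%:R * `|X| * `|Y|.
Proof.
apply: mx_norm_le => [|i j]; first by rewrite !mulr_ge0.
rewrite mxE (le_trans (ler_norm_sum _ _ _)) //.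
rewrite (le_trans (_ : _ <= \sum_(k < n) `|X| * `|Y|)) //.
  by apply: ler_sum => k _; rewrite normrM ler_pM ?mx_entry_norm_le.
by rewrite sumr_const card_ord -mulrA mulr_natl.
Qed.

Lemma exprmx_norm_le {n} (M : 'M[R]_n) k : `|M ^+ k| <= (n%:R * `|M|) ^+ k.
Proof.
elim: k => [|k IHk].
  apply: mx_norm_le => // i j; rewrite expr0 mxE.
  by case: (i == j); rewrite ?normr1 ?normr0.
rewrite !exprS -mulmxE (le_trans (mulmx_norm_le _ _)) //.
by apply: ler_wpM2l; rewrite ?mulr_ge0.
Qed.

Lemma continuous_mulmx {m n p} (X : 'M[R]_(m, n)) :
  continuous (@mulmx R m n p X).
Proof.
apply: bounded_linear_continuous; apply/linear_boundedP.
near=> c => Y; rewrite (le_trans (mulmx_norm_le _ _)) //.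
apply: (ler_wpM2r (normr_ge0 _)); near: c.
by apply: nbhs_pinfty_ge; rewrite realE mulr_ge0.
Unshelve. all: by end_near. Qed.

Lemma continuous_mulmxr {m n p} (X : 'M[R]_(n, p)) :
  continuous (@mulmxr R m n p X).
Proof.
apply: bounded_linear_continuous; apply/linear_boundedP.
near=> c => Y; rewrite /= (le_trans (mulmx_norm_le _ _)) // mulrAC.
apply: (ler_wpM2r (normr_ge0 _)); near: c.
by apply: nbhs_pinfty_ge; rewrite realE mulr_ge0.
Unshelve. all: by end_near. Qed.

End MatrixNorm.

Section MatrixExponential.
Context {R : realType}.

(* The library proves matrices complete but does not package them as a
   complete normed module, which [normed_cvg] requires. *)
HB.instance Definition _ m n :=
  Uniform_isComplete.Build 'M[R]_(m, n) (@mx_complete R m n).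

Lemma expmx_cvg {n} (M : 'M[R]_n) :
  series (fun k => (k`!%:R)^-1 *: M ^+ k) @ \oo --> expmx M.
Proof.
rewrite /expmx; apply: normed_cvg.
apply: (series_le_cvg _ _ _ (is_cvg_series_exp_coeff (n%:R * `|M|))).
- by move=> k /=.
- by move=> k; rewrite /exp_coeff divr_ge0 // exprn_ge0 // mulr_ge0.
- move=> k /=; rewrite /exp_coeff normrZ ger0_norm ?invr_ge0 // mulrC.
  by apply: ler_wpM2r; rewrite ?invr_ge0 ?exprmx_norm_le.
Qed.

Lemma comm_mx_expmx {n} (X M : 'M[R]_n) : comm_mx X M -> comm_mx X (expmx M).
Proof.
move=> XM; have S_cvg := @expmx_cvg n M; set S := series _ in S_cvg.
have XS N : comm_mx X (S N).
  apply: comm_mx_sum => k _; rewrite /comm_mx -scalemxAl -scalemxAr.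
  by congr (_ *: _); apply: commrX.
have XSX : mulmx X \o S = mulmxr X \o S by apply/funext => N /=; rewrite XS.
have lim_XS := cvg_comp _ _ S_cvg (continuous_mulmx X (expmx M)).
have lim_SX := cvg_comp _ _ S_cvg (continuous_mulmxr X (expmx M)).
by rewrite XSX in lim_XS; exact: cvg_unique lim_XS lim_SX.
Qed.

Lemma comm_mx_expmxZ {n} (A : 'M[R]_n) t : comm_mx A (expmx (t *: A)).
Proof. by apply: comm_mx_expmx; rewrite /comm_mx -scalemxAl -scalemxAr. Qed.

End MatrixExponential.

Section Sylvester.
Context {K : fieldType}.

Lemma linear_mx_ker0_surj {m n} (f : {linear 'M[K]_(m, n) -> 'M[K]_(m, n)}) :
  (forall X, f X = 0 -> X = 0) -> forall Y, exists X, f X = Y.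
Proof.
move=> f_ker0 Y.
have : row_free (lin_mx f).
  apply: inj_row_free => v; rewrite mul_rV_lin => /eqP; rewrite mxvec_eq0.
  by move=> /eqP /f_ker0 v0; rewrite -[v]vec_mxK v0 linear0.
rewrite row_free_unit => f_unit.
by exists (vec_mx (mxvec Y *m invmx (lin_mx f))); rewrite -mx_rV_lin mulmxKV ?mxvecK.
Qed.

Definition sylvester {a b} (A : 'M[K]_a) (B : 'M[K]_b) :
  {linear 'M[K]_(a, b) -> 'M[K]_(a, b)} := mulmx A \+ mulmxr B.

Context {a b : nat} {A : 'M[K]_a} {B : 'M[K]_b}.

Lemma sylvesterE X : sylvester A B X = A *m X + X *m B.
Proof. by []. Qed.

Lemma mxtrace_mul_sylvester (Q : 'M[K]_(b, a)) X :
  \tr (Q *m sylvester A B X) = \tr (sylvester B A Q *m X).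
Proof.
rewrite !sylvesterE mulmxDr mulmxDl !mxtraceD addrC !mulmxA.
by congr (_ + _); rewrite mxtrace_mulC mulmxA.
Qed.

Lemma sylvester_conj E F X : comm_mx A E -> comm_mx B F ->
  sylvester A B (E *m X *m F) = E *m sylvester A B X *m F.
Proof.
move=> AE BF; rewrite !sylvesterE mulmxDr mulmxDl !mulmxA AE.
by rewrite -!mulmxA BF.
Qed.

Lemma sylvester_trace_duality {E : 'M[K]_a} {F : 'M[K]_b}
    {G P : 'M[K]_(a, b)} {W Q : 'M[K]_(b, a)} :
  comm_mx A E -> comm_mx B F ->
  (forall X, sylvester A B X = - G + E *m G *m F <-> X = P) ->
  sylvester B A Q = - W + F *m W *m E ->
  \tr (W *m P) = \tr (Q *m G).
Proof.
move=> AE BF P_uniq SQ.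
have S_ker0 Y : sylvester A B Y = 0 -> Y = 0.
  move=> SY; apply: (addrI P); rewrite addr0; apply/P_uniq.
  by rewrite linearD SY addr0; apply/P_uniq.
have [P0 SP0] := linear_mx_ker0_surj (sylvester A B) S_ker0 (- G).
have -> : P = P0 - E *m P0 *m F.
  by apply/esym/P_uniq; rewrite linearB sylvester_conj // SP0 mulmxN mulNmx opprK.
rewrite -[G]opprK -SP0 mulmxN linearN /= mxtrace_mul_sylvester SQ.
rewrite mulmxBr mulmxDl mulNmx linearB linearD linearN /= opprD opprK.
by congr (_ - _); rewrite !mulmxA mxtrace_mulC !mulmxA.
Qed.

End Sylvester.

Lemma mxtrace_gramian_duality {K : fieldType} {a b c p : nat}
    {A : 'M[K]_a} {Ah : 'M[K]_b} {B : 'M[K]_(a, c)} {Bh : 'M[K]_(b, c)}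
    {C : 'M[K]_(p, a)} {Ch : 'M[K]_(p, b)} {E : 'M[K]_a} {F : 'M[K]_b}
    {P : 'M[K]_(a, b)} {Q : 'M[K]_(b, a)} :
  comm_mx A E -> comm_mx Ah^T F ->
  (forall X, A *m X + X *m Ah^T = - (B *m Bh^T) + E *m B *m Bh^T *m F
     <-> X = P) ->
  Ah^T *m Q + Q *m A = - (Ch^T *m C) + F *m Ch^T *m C *m E ->
  \tr (C *m P *m Ch^T) = \tr (Bh^T *m Q *m B).
Proof.
move=> AE AhF P_uniq Q_eq.
rewrite mxtrace_mulC mulmxA [in RHS]mxtrace_mulC [in RHS]mulmxA [in RHS]mxtrace_mulC.
apply: (sylvester_trace_duality AE AhF) => [X|].
  by rewrite sylvesterE !mulmxA; exact: P_uniq.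
by rewrite sylvesterE Q_eq !mulmxA.
Qed.

Theorem proposition2p3 (R : realType) (n m p r : nat)
  (A : 'M[R]_n) (B : 'M[R]_(n, m)) (C : 'M[R]_(p, n))
  (Ah : 'M[R]_r) (Bh : 'M[R]_(r, m)) (Ch : 'M[R]_(p, r))
  (T : R)
  (P : 'M[R]_n) (P2 : 'M[R]_(n, r)) (Ph : 'M[R]_r)
  (Q : 'M[R]_n) (Q2 : 'M[R]_(r, n)) (Qh : 'M[R]_r) :
  hurwitz A -> 0 < T ->
  (* P_T is the solution of its Lyapunov equation *)
  (forall X : 'M[R]_n,
     A *m X + X *m A^T
       = - (B *m B^T) + expmx (T *: A) *m B *m B^T *m expmx (T *: A^T)
     <-> X = P) ->
  (* P_{2,T} is the solution of its Sylvester equation *)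
  (forall X : 'M[R]_(n, r),
     A *m X + X *m Ah^T
       = - (B *m Bh^T) + expmx (T *: A) *m B *m Bh^T *m expmx (T *: Ah^T)
     <-> X = P2) ->
  (* \hat P_T is the solution of its Lyapunov equation *)
  (forall X : 'M[R]_r,
     Ah *m X + X *m Ah^T
       = - (Bh *m Bh^T) + expmx (T *: Ah) *m Bh *m Bh^T *m expmx (T *: Ah^T)
     <-> X = Ph) ->
  (* Q_T, Q_{2,T}, \hat Q_T satisfy their equations *)
  A^T *m Q + Q *m A
    = - (C^T *m C) + expmx (T *: A^T) *m C^T *m C *m expmx (T *: A) ->
  Ah^T *m Q2 + Q2 *m A
    = - (Ch^T *m C) + expmx (T *: Ah^T) *m Ch^T *m C *m expmx (T *: A) ->
  Ah^T *m Qh + Qh *m Ah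
    = - (Ch^T *m Ch) + expmx (T *: Ah^T) *m Ch^T *m Ch *m expmx (T *: Ah) ->
  [/\ \tr (C *m P *m C^T) = \tr (B^T *m Q *m B),
      \tr (Ch *m Ph *m Ch^T) = \tr (Bh^T *m Qh *m Bh)
    & \tr (C *m P2 *m Ch^T) = \tr (Bh^T *m Q2 *m B)].
Proof.
move=> _ _ P_uniq P2_uniq Ph_uniq Q_eq Q2_eq Qh_eq.
split.
- exact: mxtrace_gramian_duality (comm_mx_expmxZ _ _) (comm_mx_expmxZ _ _) P_uniq Q_eq.
- exact: mxtrace_gramian_duality (comm_mx_expmxZ _ _) (comm_mx_expmxZ _ _) Ph_uniq Qh_eq.
- exact: mxtrace_gramian_duality (comm_mx_expmxZ _ _) (comm_mx_expmxZ _ _) P2_uniq Q2_eq.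
Qed.
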